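(* The sequence $(f_n)_{n\ge 1}$ is strictly decreasing, i.e. $f_{n+1}<f_n$ for every integer $n\ge 1$.
   Context: Let $e(x)=(1+x)^{1/x}$ for $x>-1$, $x\neq 0$, and $e(0)=\mathrm{e}$ (the base of the natural logarithm). For $x\in(-1,1)$ one has the Maclaurin expansion $e(x)=\mathrm{e}\bigl(1+\sum_{k=1}^\infty e_k x^k\bigr)$ with $e_0=1$ (so $e_1=-\tfrac12$, $e_2=\tfrac{11}{24}$, $e_3=-\tfrac7{16},\dots$). Equivalently, for $k\ge1$, $e_k=\mathrm{e}^{-1}\sum_{i=1}^\infty \frac{S_1(k+i,i)}{(k+i)!}$, where $S_1(p,q)$ are the (signed) Stirling numbers of the first kind, defined by $S_1(p,p)=1$, $S_1(p,q)=0$ for $p<q$, and $S_1(p+1,q)=-pS_1(p,q)+S_1(p,q-1)$; the sign of $S_1(p,q)$ is $(-1)^{p-q}$. Define $f_k=(-1)^k e_k$ for $k\ge 0$. *)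

From Stdlib Require Import Reals ZArith Arith Lra Lia ClassicalEpsilon.
Open Scope R_scope.

Fixpoint stirling1 (p q : nat) : Z :=
  match p with
  | O => match q with O => 1%Z | S _ => 0%Z end
  | S p' => (- Z.of_nat p' * stirling1 p' q
             + match q with O => 0%Z | S q' => stirling1 p' q' end)%Z
  end.

Definition e_term (k : nat) (i : nat) : R :=
  IZR (stirling1 (k + S i) (S i)) / INR (fact (k + S i)).

(* e_k = e^{-1} * sum_{i>=1} S_1(k+i,i)/(k+i)!  for k >= 1, and e_0 = 1.
   The sum is the (unique) limit of the series, chosen by epsilon. *)
Definition e_coef (k : nat) : R :=
  match k with
  | O => 1
  | S _ => exp (-1) *
      epsilon (inhabits 0) (fun l => infinite_sum (e_term k) l)
  end.

Definition f_coef (k : nat) : R := (-1) ^ k * e_coef k.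

(* Let c(i,m) = |S_1(m,i)|/m! be the coefficient of x^m in F_i = (-ln(1-x))^i/i!
   and s_n = sum_i c(i, n+i), so that f_n = e^{-1} s_n for n >= 1 and s_0 = e.
   The identities (i+1) F_{i+1} = F_i (-ln(1-x)) and (1-x) F_{i+1}' = F_i give,
   diagonal by diagonal, the recurrence
     n s_n = sum_{l<n} (1 - 1/(n-l+1)) s_l.
   Summation by parts turns it into a Volterra-type recurrence for the
   differences d_m = s_m - s_{m+1}:
     (m+1) d_m = s_0/(m+2) - sum_{j<m} d_j/(m-j+1),
   and since the kernel 1/(k+1) decreases in a controlled way,
   (m+3)/(k+2) <= (m+2)/(k+1) for k <= m+1, positivity of d_0, ..., d_m forces
   positivity of d_{m+1}. *)

From Stdlib Require Import Reals Arith Lra Lia ClassicalEpsilon.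
From Coquelicot Require Import Coquelicot.
Open Scope R_scope.

Fixpoint sum_lt (f : nat -> R) (n : nat) : R :=
  match n with O => 0 | S n' => sum_lt f n' + f n' end.

Lemma sum_lt_ext f g n :
  (forall k, (k < n)%nat -> f k = g k) -> sum_lt f n = sum_lt g n.
Proof.
  induction n as [|n IH]; intros H; simpl; [reflexivity|].
  rewrite IH, H; [reflexivity|lia|intros; apply H; lia].
Qed.

Lemma sum_lt_zero f n : (forall k, (k < n)%nat -> f k = 0) -> sum_lt f n = 0.
Proof.
  intros H. rewrite (sum_lt_ext f (fun _ => 0)) by exact H.
  clear H. induction n; simpl; lra.
Qed.

Lemma sum_lt_succ f n : sum_lt f (S n) = sum_lt f n + f n.
Proof. reflexivity. Qed.

Lemma sum_lt_succ_l f n : sum_lt f (S n) = f O + sum_lt (fun k => f (S k)) n.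
Proof. induction n as [|n IH]; simpl in *; [ring|]. rewrite IH; ring. Qed.

Lemma sum_lt_add f a b :
  sum_lt f (a + b) = sum_lt f a + sum_lt (fun k => f (a + k)%nat) b.
Proof.
  induction b as [|b IH]; simpl; [rewrite Nat.add_0_r; ring|].
  rewrite Nat.add_succ_r; simpl. rewrite IH; ring.
Qed.

Lemma sum_lt_plus f g n : sum_lt (fun k => f k + g k) n = sum_lt f n + sum_lt g n.
Proof. induction n as [|n IH]; simpl; [ring|]. rewrite IH; ring. Qed.

Lemma sum_lt_minus f g n : sum_lt (fun k => f k - g k) n = sum_lt f n - sum_lt g n.
Proof. induction n as [|n IH]; simpl; [ring|]. rewrite IH; ring. Qed.

Lemma sum_lt_scal c f n : sum_lt (fun k => c * f k) n = c * sum_lt f n.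
Proof. induction n as [|n IH]; simpl; [ring|]. rewrite IH; ring. Qed.

Lemma sum_lt_le f g n :
  (forall k, (k < n)%nat -> f k <= g k) -> sum_lt f n <= sum_lt g n.
Proof.
  induction n as [|n IH]; intros H; simpl; [lra|].
  apply Rplus_le_compat; [apply IH; intros; apply H|apply H]; lia.
Qed.

Lemma sum_lt_telescope u n : sum_lt (fun k => u k - u (S k)) n = u O - u n.
Proof. induction n as [|n IH]; simpl; [ring|]. rewrite IH; ring. Qed.

(** * Power series coefficients *)

Definition conv (a b : nat -> R) (m : nat) : R :=
  sum_lt (fun k => a k * b (m - k)%nat) (S m).

(* The coefficients of -ln(1-x). *)
Definition log_coef (j : nat) : R := match j with O => 0 | S _ => / INR j end.

(* The coefficients of (1-x) a'(x). *)
Definition omx_deriv (a : nat -> R) (m : nat) : R :=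
  INR (S m) * a (S m) - INR m * a m.

Lemma INR_succ_neq0 n : INR (S n) <> 0.
Proof. apply not_0_INR; lia. Qed.

Lemma INR_mul_log_coef j : (0 < j)%nat -> INR j * log_coef j = 1.
Proof. intros Hj. destruct j as [|j]; [lia|]. apply Rinv_r, INR_succ_neq0. Qed.

(* Split the weight m = k + (m - k); the factor m - k cancels log_coef (m - k). *)
Lemma mul_conv_log a m :
  INR m * conv a log_coef m
  = sum_lt a m + conv (fun k => INR k * a k) log_coef m.
Proof.
  unfold conv.
  replace (sum_lt a m) with
    (sum_lt (fun k => a k * (INR (m - k) * log_coef (m - k))) (S m)).
  2:{ simpl sum_lt at 1. rewrite Nat.sub_diag. simpl log_coef.
      rewrite Rmult_0_r, Rmult_0_r, Rplus_0_r. apply sum_lt_ext. intros k Hk.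
      rewrite INR_mul_log_coef by lia. ring. }
  rewrite <- sum_lt_scal, <- sum_lt_plus. apply sum_lt_ext. intros k Hk.
  rewrite minus_INR by lia. ring.
Qed.

(* Coefficient form of (1-x)(a L)' = (1-x) a' L + a for L = -ln(1-x). *)
Lemma omx_deriv_conv_log a m :
  omx_deriv (conv a log_coef) m = conv (omx_deriv a) log_coef m + a m.
Proof.
  unfold omx_deriv at 1. rewrite (mul_conv_log a (S m)), (mul_conv_log a m).
  unfold conv, omx_deriv. rewrite (sum_lt_succ_l _ (S m)).
  replace (sum_lt (fun k => (INR (S k) * a (S k) - INR k * a k) * log_coef (m - k)) (S m))
    with (sum_lt (fun k => INR (S k) * a (S k) * log_coef (S m - S k)) (S m)
          - sum_lt (fun k => INR k * a k * log_coef (m - k)) (S m))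
    by (rewrite <- sum_lt_minus; apply sum_lt_ext; intros; simpl; ring).
  simpl (INR 0). simpl (sum_lt a (S m)). ring.
Qed.

Lemma omx_deriv_scal c a m : omx_deriv (fun k => c * a k) m = c * omx_deriv a m.
Proof. unfold omx_deriv. ring. Qed.

Lemma omx_deriv_inj a b :
  a O = b O -> (forall m, omx_deriv a m = omx_deriv b m) -> forall m, a m = b m.
Proof.
  intros H0 HD m. induction m as [|m IH]; [exact H0|].
  apply (Rmult_eq_reg_l (INR (S m))); [|apply INR_succ_neq0].
  specialize (HD m). unfold omx_deriv in HD. rewrite IH in HD. lra.
Qed.

(** * Stirling numbers and the coefficients of (-ln(1-x))^i/i! *)

Lemma stirling1_succ_0 p : stirling1 (S p) 0 = 0%Z.
Proof. induction p as [|p IH]; simpl in *; [reflexivity|]. rewrite IH. lia. Qed.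

Lemma stirling1_lt p q : (p < q)%nat -> stirling1 p q = 0%Z.
Proof.
  revert q. induction p as [|p IH]; intros q Hq.
  - destruct q; [lia|reflexivity].
  - destruct q as [|q]; [lia|]. simpl. rewrite IH, IH by lia. lia.
Qed.

Lemma stirling1_diag p : stirling1 p p = 1%Z.
Proof. induction p as [|p IH]; [reflexivity|]. simpl. rewrite IH, stirling1_lt by lia. lia. Qed.

(* [logpow_coef i m] is the coefficient of x^m in (-ln(1-x))^i/i!. *)
Definition logpow_coef (i m : nat) : R :=
  (-1) ^ (m + i) * IZR (stirling1 m i) / INR (fact m).

Lemma logpow_coef_lt i m : (m < i)%nat -> logpow_coef i m = 0.
Proof. intros H. unfold logpow_coef. rewrite stirling1_lt by exact H. unfold Rdiv. ring. Qed.

Lemma logpow_coef_0_succ m : logpow_coef 0 (S m) = 0.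
Proof. unfold logpow_coef. rewrite stirling1_succ_0. unfold Rdiv. ring. Qed.

Lemma pow_neg1_mul_self k : (-1) ^ k * (-1) ^ k = 1.
Proof. rewrite <- Rpow_mult_distr. replace (-1 * -1) with 1 by ring. apply pow1. Qed.

Lemma logpow_coef_diag i : logpow_coef i i = / INR (fact i).
Proof. unfold logpow_coef. rewrite stirling1_diag, pow_add, pow_neg1_mul_self. unfold Rdiv. ring. Qed.

(* The Stirling recurrence is the coefficient form of (1-x) F_{i+1}' = F_i. *)
Lemma omx_deriv_logpow_coef i m : omx_deriv (logpow_coef (S i)) m = logpow_coef i m.
Proof.
  unfold omx_deriv, logpow_coef.
  change (stirling1 (S m) (S i)) with (- Z.of_nat m * stirling1 m (S i) + stirling1 m i)%Z.
  rewrite plus_IZR, mult_IZR, opp_IZR, <- INR_IZR_INZ.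
  replace (S m + S i)%nat with (S (S (m + i))) by lia.
  replace (m + S i)%nat with (S (m + i)) by lia.
  rewrite fact_simpl, mult_INR. simpl pow.
  field. split; [apply INR_fact_neq_0|apply INR_succ_neq0].
Qed.

Lemma conv_logpow_coef_log i m :
  conv (logpow_coef i) log_coef m = INR (S i) * logpow_coef (S i) m.
Proof.
  revert m. induction i as [|i IH]; apply omx_deriv_inj.
  1, 3: unfold conv; simpl sum_lt; simpl log_coef;
    rewrite Rmult_0_r, logpow_coef_lt by lia; ring.
  all: intros m; rewrite omx_deriv_conv_log, omx_deriv_scal, omx_deriv_logpow_coef.
  - unfold conv. rewrite sum_lt_zero; [simpl INR; ring|].
    intros k _. unfold omx_deriv. destruct k; rewrite !logpow_coef_0_succ; [simpl INR|]; ring.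
  - unfold conv. rewrite (sum_lt_ext _ (fun k => logpow_coef i k * log_coef (m - k)))
      by (intros; rewrite omx_deriv_logpow_coef; reflexivity).
    fold (conv (logpow_coef i) log_coef m). rewrite IH, !S_INR. ring.
Qed.

(** * The diagonal sums s_n *)

Lemma sum_logpow_coef_diag i n :
  INR (S (n + i)) * logpow_coef (S i) (S (n + i))
  = sum_lt (fun l => logpow_coef i (l + i)) (S n).
Proof.
  assert (Hstep : forall m, INR (S m) * logpow_coef (S i) (S m)
                            = INR m * logpow_coef (S i) m + logpow_coef i m).
  { intros m. rewrite <- (omx_deriv_logpow_coef i m). unfold omx_deriv. ring. }
  induction n as [|n IH].
  - rewrite Hstep, (logpow_coef_lt (S i) (0 + i)) by lia. simpl. ring.
  - change (S n + i)%nat with (S (n + i)). rewrite Hstep, IH. reflexivity.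
Qed.

Lemma conv_logpow_coef_diag i n :
  conv (logpow_coef i) log_coef (S (n + i))
  = sum_lt (fun l => logpow_coef i (l + i) / INR (S (n - l))) (S n).
Proof.
  unfold conv. replace (S (S (n + i))) with (i + S (S n))%nat by lia.
  rewrite sum_lt_add, sum_lt_zero by (intros; rewrite logpow_coef_lt by lia; ring).
  rewrite sum_lt_succ. cbv beta.
  replace (S (n + i) - (i + S n))%nat with 0%nat by lia.
  rewrite Rplus_0_l, Rmult_0_r, Rplus_0_r. apply sum_lt_ext. intros l Hl.
  replace (S (n + i) - (i + l))%nat with (S (n - l)) by lia.
  rewrite Nat.add_comm. reflexivity.
Qed.

Lemma logpow_coef_diag_rec i n :
  INR n * logpow_coef (S i) (S (n + i))
  = sum_lt (fun l => (1 - / INR (S (n - l))) * logpow_coef i (l + i)) n.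
Proof.
  replace (INR n) with (INR (S (n + i)) - INR (S i)) by (rewrite !S_INR, plus_INR; ring).
  rewrite Rmult_minus_distr_r, sum_logpow_coef_diag,
    <- conv_logpow_coef_log, conv_logpow_coef_diag, <- sum_lt_minus, sum_lt_succ.
  rewrite Nat.sub_diag. replace (INR (S 0)) with 1 by reflexivity.
  rewrite Rdiv_1_r, Rminus_diag, Rplus_0_r.
  apply sum_lt_ext. intros. unfold Rdiv. ring.
Qed.

Definition stir_sum (n : nat) : R := Series (fun i => logpow_coef i (n + i)).

Lemma is_series_zero : is_series (fun _ : nat => 0) 0.
Proof.
  apply is_series_Reals. intros eps Heps. exists O. intros n _.
  rewrite sum_cte, Rmult_0_l, Rdist_eq. exact Heps.
Qed.

Lemma is_series_mult_l c (a : nat -> R) l :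
  is_series a l -> is_series (fun n => c * a n) (c * l).
Proof. exact (is_series_scal_l c a l). Qed.

Lemma is_series_sum_lt (F : nat -> nat -> R) (v : nat -> R) n :
  (forall l, (l < n)%nat -> is_series (F l) (v l)) ->
  is_series (fun i => sum_lt (fun l => F l i) n) (sum_lt v n).
Proof.
  induction n as [|n IH]; intros H; simpl; [exact is_series_zero|].
  exact (is_series_plus _ _ _ _ (IH (fun l Hl => H l ltac:(lia))) (H n ltac:(lia))).
Qed.

Lemma is_series_logpow_diag_0 : is_series (fun i => logpow_coef i (0 + i)) (exp 1).
Proof.
  apply is_series_Reals, (Un_cv_ext (E1 1)); [|exact (E1_cvg 1)].
  intros N. apply sum_eq. intros i _. simpl (0 + i)%nat.
  rewrite logpow_coef_diag, pow1. ring.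
Qed.

Lemma is_series_logpow_diag_succ (v : nat -> R) n :
  (forall l, (l <= n)%nat -> is_series (fun i => logpow_coef i (l + i)) (v l)) ->
  is_series (fun i => logpow_coef (S i) (S n + S i))
    (/ INR (S n) * sum_lt (fun l => (1 - / INR (S (S n - l))) * v l) (S n)).
Proof.
  intros Hv.
  apply (is_series_ext (fun i => / INR (S n)
           * sum_lt (fun l => (1 - / INR (S (S n - l))) * logpow_coef i (l + i)) (S n))).
  - intros i. rewrite <- logpow_coef_diag_rec, <- Rmult_assoc, Rinv_l, Rmult_1_l
      by apply INR_succ_neq0.
    f_equal. lia.
  - apply is_series_mult_l.
    apply (is_series_sum_lt (fun l i => (1 - / INR (S (S n - l))) * logpow_coef i (l + i))).
    intros l Hl. apply is_series_mult_l, Hv. lia.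
Qed.

Lemma is_series_stir_sum n : is_series (fun i => logpow_coef i (n + i)) (stir_sum n).
Proof.
  apply Series_correct. induction n as [n IH] using lt_wf_ind. destruct n as [|n].
  - exists (exp 1). exact is_series_logpow_diag_0.
  - apply ex_series_incr_1. eexists. apply is_series_logpow_diag_succ.
    intros l Hl. apply Series_correct, IH. lia.
Qed.

Lemma stir_sum_0 : stir_sum 0 = exp 1.
Proof. exact (is_series_unique _ _ is_series_logpow_diag_0). Qed.

Lemma stir_sum_rec n :
  INR n * stir_sum n = sum_lt (fun l => (1 - / INR (S (n - l))) * stir_sum l) n.
Proof.
  destruct n as [|n]; [simpl; ring|].
  assert (H := is_series_logpow_diag_succ stir_sum n (fun l _ => is_series_stir_sum l)).
  unfold stir_sum at 1. rewrite Series_incr_1 by (eexists; apply is_series_stir_sum).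
  rewrite (is_series_unique _ _ H), Nat.add_0_r, logpow_coef_0_succ.
  field. apply INR_succ_neq0.
Qed.

(** * Positivity of the differences *)

Lemma inv_succ_shift_le m k :
  (k <= S m)%nat -> (INR m + 3) / INR (S (S k)) <= (INR m + 2) / INR (S k).
Proof.
  intros Hk. assert (HK : INR k <= INR m + 1) by (rewrite <- S_INR; apply le_INR, Hk).
  assert (HK0 := pos_INR k). rewrite !S_INR.
  assert (E : (INR m + 2) / (INR k + 1) - (INR m + 3) / (INR k + 1 + 1)
              = (INR m + 1 - INR k) * / ((INR k + 1) * (INR k + 2))) by (field; lra).
  assert (0 <= (INR m + 1 - INR k) * / ((INR k + 1) * (INR k + 2)))
    by (apply Rle_mult_inv_pos; nra).
  lra.
Qed.

Section DifferencesPositive.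

Variable s : nat -> R.
Hypothesis s0_pos : 0 < s O.
Hypothesis s_rec :
  forall n, INR n * s n = sum_lt (fun l => (1 - / INR (S (n - l))) * s l) n.

Lemma diff_rec m :
  INR (S m) * (s m - s (S m))
  = s O / INR (S (S m)) - sum_lt (fun j => (s j - s (S j)) / INR (S (m - j))) m.
Proof.
  assert (Hm := s_rec m). assert (Hsm := s_rec (S m)).
  rewrite sum_lt_succ_l, Nat.sub_0_r in Hsm.
  assert (Htel := sum_lt_telescope s m).
  assert (Hsplit : sum_lt (fun j => s j - s (S j)) m
    = sum_lt (fun l => (1 - / INR (S (m - l))) * s l) m
      - sum_lt (fun j => (1 - / INR (S (S m - S j))) * s (S j)) m
      + sum_lt (fun j => (s j - s (S j)) / INR (S (m - j))) m).
  { rewrite <- sum_lt_minus, <- sum_lt_plus. apply sum_lt_ext. intros j _.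
    simpl (S m - S j)%nat. unfold Rdiv. ring. }
  rewrite S_INR in *. unfold Rdiv. lra.
Qed.

(* With X, Y the sums in [diff_rec] for m and m+1, the comparison
   [inv_succ_shift_le] gives (m+3) Y <= (m+2) X, which leaves
   (m+3)(m+2) d_{m+1} >= ((m+2)(m+1) - (m+3)/2) d_m. *)
Lemma diff_pos m : 0 < s m - s (S m).
Proof.
  induction m as [m IH] using lt_wf_ind. destruct m as [|m].
  - assert (E := diff_rec 0). simpl in E.
    assert (0 < s O * / (1 + 1)) by (apply Rmult_lt_0_compat; lra). lra.
  - set (d := fun j => s j - s (S j)).
    set (X := sum_lt (fun j => d j / INR (S (m - j))) m).
    set (Y := sum_lt (fun j => d j / INR (S (S m - j))) m).
    assert (E0 : INR (S m) * d m = s O / INR (S (S m)) - X) by apply diff_rec.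
    assert (E1 : INR (S (S m)) * d (S m) = s O / INR (S (S (S m))) - (Y + d m / 2)).
    { rewrite diff_rec, sum_lt_succ. replace (S m - m)%nat with 1%nat by lia. reflexivity. }
    assert (HXY : (INR m + 3) * Y <= (INR m + 2) * X).
    { unfold X, Y. rewrite <- !sum_lt_scal. apply sum_lt_le. intros j Hj.
      replace (S m - j)%nat with (S (m - j)) by lia.
      assert (Hd : 0 < d j) by (apply IH; lia).
      assert (Hk := inv_succ_shift_le m (m - j) ltac:(lia)).
      unfold Rdiv in *. nra. }
    assert (Hd : 0 < d m) by (apply IH; lia).
    assert (HM := pos_INR m). repeat rewrite S_INR in E0. repeat rewrite S_INR in E1.
    assert (K1 : (INR m + 3) * ((INR m + 2) * d (S m))
                 = s O - (INR m + 3) * Y - (INR m + 3) * d m / 2).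
    { replace (INR m + 2) with (INR m + 1 + 1) by ring. rewrite E1. field. lra. }
    assert (K0 : (INR m + 2) * ((INR m + 1) * d m) = s O - (INR m + 2) * X).
    { rewrite E0. field. lra. }
    assert (0 < ((INR m + 2) * (INR m + 1) - (INR m + 3) / 2) * d m) by nra.
    assert (Hpos : 0 < (INR m + 3) * ((INR m + 2) * d (S m))) by nra.
    change (0 < d (S m)).
    apply (Rmult_lt_reg_l ((INR m + 3) * (INR m + 2))); [nra|].
    rewrite Rmult_0_r, Rmult_assoc. exact Hpos.
Qed.

End DifferencesPositive.

Lemma e_term_logpow_coef k i : e_term k i = (-1) ^ k * logpow_coef (S i) (k + S i).
Proof.
  unfold e_term, logpow_coef. rewrite !pow_add.
  replace ((-1) ^ k * ((-1) ^ k * (-1) ^ S i * (-1) ^ S i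
             * IZR (stirling1 (k + S i) (S i)) / INR (fact (k + S i))))
    with ((-1) ^ k * (-1) ^ k * ((-1) ^ S i * (-1) ^ S i)
          * (IZR (stirling1 (k + S i) (S i)) / INR (fact (k + S i))))
    by (unfold Rdiv; ring).
  rewrite !pow_neg1_mul_self. ring.
Qed.

Lemma f_coef_stir_sum k : (1 <= k)%nat -> f_coef k = exp (-1) * stir_sum k.
Proof.
  intros Hk. destruct k as [|k]; [lia|].
  assert (Hser : infinite_sum (e_term (S k)) ((-1) ^ S k * stir_sum (S k))).
  { apply is_series_Reals.
    apply (is_series_ext (fun i => (-1) ^ S k * logpow_coef (S i) (S k + S i))).
    - intros i. symmetry. apply e_term_logpow_coef.
    - apply is_series_mult_l, (is_series_incr_1 (fun i => logpow_coef i (S k + i))).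
      rewrite Nat.add_0_r, logpow_coef_0_succ.
      change (plus (stir_sum (S k)) 0) with (stir_sum (S k) + 0).
      rewrite Rplus_0_r. apply is_series_stir_sum. }
  unfold f_coef, e_coef.
  rewrite (uniqueness_sum _ _ _ (epsilon_spec (inhabits 0)
    (fun l => infinite_sum (e_term (S k)) l) (ex_intro _ _ Hser)) Hser).
  replace ((-1) ^ S k * (exp (-1) * ((-1) ^ S k * stir_sum (S k))))
    with ((-1) ^ S k * (-1) ^ S k * (exp (-1) * stir_sum (S k))) by ring.
  rewrite pow_neg1_mul_self. ring.
Qed.

Theorem mainTheorem1 : forall n : nat, (1 <= n)%nat -> f_coef (S n) < f_coef n.
Proof.
  intros n Hn. rewrite !f_coef_stir_sum by lia.
  apply Rmult_lt_compat_l; [apply exp_pos|].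
  assert (Hs0 : 0 < stir_sum 0) by (rewrite stir_sum_0; apply exp_pos).
  assert (Hd := diff_pos stir_sum Hs0 stir_sum_rec n).
  lra.
Qed.
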